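(* Let $\mathbf{A}$ be an algebra and $B,C$ subuniverses of $\mathbf{A}$. Suppose $B$ Jónsson absorbs $\mathbf{A}$ via a Jónsson absorption chain $d_0,\dots,d_k$ and $C$ Jónsson absorbs $\mathbf{A}$ via a Jónsson absorption chain $e_0,\dots,e_l$. Then there is a sequence of ternary terms $f_0,\dots,f_{kl+k}$ which is a Jónsson absorption chain both for $B$ and for $C$; explicitly, one may take $f_{a(l+1)+b}(x,y,z)=d_a(x,e_b(x,y,z),z)$ for $0\le a\le k$, $0\le b\le l$.
   Context: Jónsson absorption chain: for a subuniverse $B$ of $\mathbf{A}$, ternary terms $d_0,\dots,d_n$ of $\mathbf{A}$ such that $d_i(b,a,b')\in B$ for all $i$, all $b,b'\in B$, $a\in A$; $d_i(x,y,y)=d_{i+1}(x,x,y)$ for all $i<n$ and all $x,y\in A$; $d_0(x,y,z)=x$ and $d_n(x,y,z)=z$ for all $x,y,z\in A$. $B$ Jónsson absorbs $\mathbf{A}$ if such a chain exists. *)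

From mathcomp Require Import all_boot.
Set Implicit Arguments. Unset Strict Implicit. Unset Printing Implicit Defensive.

Record signature := Signature { sym : Type; arity : sym -> nat }.

Record algebra (S : signature) := Algebra {
  carrier :> Type;
  op : forall s : sym S, ('I_(arity s) -> carrier) -> carrier }.

Inductive term (S : signature) (X : Type) : Type :=
  | Var : X -> term S X
  | App : forall s : sym S, ('I_(arity s) -> term S X) -> term S X.
Arguments Var {S X} x.
Arguments App {S X} s ts.

Fixpoint eval (S : signature) (A : algebra S) (X : Type) (env : X -> A)
  (t : term S X) : A :=
  match t with
  | Var x => env x
  | App s ts => @op S A s (fun j => eval env (ts j))
  end.

Fixpoint tsubst (S : signature) (X Y : Type) (sigma : X -> term S Y)
  (t : term S X) : term S Y :=
  match t with
  | Var x => sigma x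
  | App s ts => App s (fun j => tsubst sigma (ts j))
  end.

Definition env3 (T : Type) (x y z : T) : 'I_3 -> T :=
  fun i => match val i with 0 => x | 1 => y | _ => z end.

Definition tterm (S : signature) := term S 'I_3.
Definition tfun (S : signature) (A : algebra S) (t : tterm S) (x y z : A) : A :=
  eval (env3 x y z) t.

Definition vx (S : signature) : tterm S := Var (@Ordinal 3 0 isT).
Definition vy (S : signature) : tterm S := Var (@Ordinal 3 1 isT).
Definition vz (S : signature) : tterm S := Var (@Ordinal 3 2 isT).

Definition compose3 (S : signature) (t u1 u2 u3 : tterm S) : tterm S :=
  tsubst (env3 u1 u2 u3) t.

Definition subuniverse (S : signature) (A : algebra S) (B : A -> Prop) : Prop :=
  forall (s : sym S) (args : 'I_(arity s) -> A),
    (forall j, B (args j)) -> B (@op S A s args).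

Definition jonsson_chain (S : signature) (A : algebra S) (B : A -> Prop)
  (n : nat) (d : nat -> tterm S) : Prop :=
  [/\ (forall i, i <= n -> forall (b b' a : A), B b -> B b' -> B (tfun (d i) b a b')),
      (forall i, i < n -> forall x y : A, tfun (d i) x y y = tfun (d i.+1) x x y),
      (forall x y z : A, tfun (d 0) x y z = x) &
      (forall x y z : A, tfun (d n) x y z = z)].

Definition jonsson_absorbs (S : signature) (A : algebra S) (B : A -> Prop) : Prop :=
  subuniverse B /\ exists n d, @jonsson_chain S A B n d.

(** Compose the two chains lexicographically: [f] runs through [d_0, ..., d_k],
    and between [d_a] and [d_(a+1)] it interpolates the middle argument through
    [e_0, ..., e_l].  The Jónsson identities of [f] inside a block come from those
    of [e], and at a block boundary from [e_l(x,y,y) = y = e_0(x,x,y)] together with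
    [d_a(x,y,y) = d_(a+1)(x,x,y)].  Absorption of [B] only needs that every [d_a]
    absorbs into [B] whatever its middle argument; absorption of [C] holds because
    [e_b(c,a,c')] lies in [C] and [C] is closed under the term operation [d_a]. *)
From mathcomp Require Import all_boot.
From mathcomp Require Import zify.
From Stdlib Require Import FunctionalExtensionality.

Set Implicit Arguments.
Unset Strict Implicit.
Unset Printing Implicit Defensive.

Lemma eval_tsubst (S : signature) (A : algebra S) (X Y : Type) (env : Y -> A)
  (sigma : X -> term S Y) (t : term S X) :
  eval env (tsubst sigma t) = eval (fun v => eval env (sigma v)) t.
Proof.
elim: t => [x|s ts IH] //=.
by congr (op _); apply: functional_extensionality => j; apply: IH.
Qed.

Lemma tfun_compose3 (S : signature) (A : algebra S) (t u1 u2 u3 : tterm S)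
  (x y z : A) :
  tfun (compose3 t u1 u2 u3) x y z =
  tfun t (tfun u1 x y z) (tfun u2 x y z) (tfun u3 x y z).
Proof.
rewrite /tfun /compose3 eval_tsubst; congr (eval _ t).
by apply: functional_extensionality => -[[|[|[|i]]] Hi].
Qed.

Lemma subuniverse_eval (S : signature) (A : algebra S) (C : A -> Prop)
  (X : Type) (env : X -> A) (t : term S X) :
  subuniverse C -> (forall x, C (env x)) -> C (eval env t).
Proof.
move=> hC Cenv; elim: t => [x|s ts IH] /=; first exact: Cenv.
by apply: hC => j; apply: IH.
Qed.

Lemma subuniverse_tfun (S : signature) (A : algebra S) (C : A -> Prop)
  (t : tterm S) (x y z : A) :
  subuniverse C -> C x -> C y -> C z -> C (tfun t x y z).
Proof. by move=> hC Cx Cy Cz; apply: subuniverse_eval => // -[[|[|[|i]]] Hi]. Qed.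

Lemma divn_modn_block (a b l : nat) : b <= l ->
  (a * l.+1 + b) %/ l.+1 = a /\ (a * l.+1 + b) %% l.+1 = b.
Proof.
move=> le_bl; rewrite divnMDl // modnMDl divn_small ?modn_small ?addn0 //; lia.
Qed.

Section JonssonChainProduct.

Variables (S : signature) (A : algebra S).

Definition jonsson_absorbing (B : A -> Prop) (n : nat) (d : nat -> tterm S) :=
  forall i, i <= n -> forall (b b' a : A), B b -> B b' -> B (tfun (d i) b a b').

Definition jonsson_identities (n : nat) (d : nat -> tterm S) :=
  [/\ forall i, i < n -> forall x y : A, tfun (d i) x y y = tfun (d i.+1) x x y,
      forall x y z : A, tfun (d 0) x y z = x &
      forall x y z : A, tfun (d n) x y z = z].

Lemma jonsson_chainP (B : A -> Prop) (n : nat) (d : nat -> tterm S) :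
  jonsson_chain B n d <-> jonsson_absorbing B n d /\ jonsson_identities n d.
Proof. by split=> [[? ? ? ?]|[? [? ? ?]]]. Qed.

Variables (k l : nat) (d e : nat -> tterm S).

Definition chain_product (n : nat) : tterm S :=
  compose3 (d (n %/ l.+1)) (vx S) (e (n %% l.+1)) (vz S).

Lemma chain_product_block (a b : nat) : b <= l ->
  chain_product (a * l.+1 + b) = compose3 (d a) (vx S) (e b) (vz S).
Proof.
by move=> le_bl; rewrite /chain_product; case: (@divn_modn_block a b l le_bl) => -> ->.
Qed.

Lemma tfun_chain_product (n : nat) (x y z : A) :
  tfun (chain_product n) x y z =
  tfun (d (n %/ l.+1)) x (tfun (e (n %% l.+1)) x y z) z.
Proof. by rewrite tfun_compose3. Qed.

Lemma tfun_chain_product_block (a b : nat) (x y z : A) : b <= l ->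
  tfun (chain_product (a * l.+1 + b)) x y z = tfun (d a) x (tfun (e b) x y z) z.
Proof. by move=> le_bl; rewrite chain_product_block // tfun_compose3. Qed.

Lemma chain_product_index_le (n : nat) : n <= k * l + k -> n %/ l.+1 <= k.
Proof. by move=> le_n; rewrite -ltnS ltn_divLR //; lia. Qed.

Lemma chain_product_identities :
  jonsson_identities k d -> jonsson_identities l e ->
  jonsson_identities (k * l + k) chain_product.
Proof.
case=> dstep d0 dk [estep e0 el]; split.
- move=> i lt_i x y; rewrite (divn_eq i l.+1).
  set a := i %/ l.+1; set b := i %% l.+1.
  have le_bl : b <= l by rewrite -ltnS ltn_mod.
  have [lt_bl | eq_bl] : b < l \/ b = l by lia.
    by rewrite -addnS !tfun_chain_product_block // estep.
  have lt_ak : a < k.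
    by move: lt_i; rewrite (divn_eq i l.+1) -/a -/b eq_bl mulnS; nia.
  have -> : (a * l.+1 + b).+1 = a.+1 * l.+1 + 0 by rewrite eq_bl mulSn; lia.
  by rewrite !tfun_chain_product_block // eq_bl el e0 dstep.
- by move=> x y z; rewrite tfun_chain_product d0.
- have -> : k * l + k = k * l.+1 + 0 by rewrite mulnS; lia.
  by move=> x y z; rewrite tfun_chain_product_block // dk.
Qed.

Lemma chain_product_absorbing_left (B : A -> Prop) :
  jonsson_absorbing B k d -> jonsson_absorbing B (k * l + k) chain_product.
Proof.
move=> dabs i le_i b b' a Bb Bb'; rewrite tfun_chain_product.
by apply: dabs => //; apply: chain_product_index_le.
Qed.

Lemma chain_product_absorbing_right (C : A -> Prop) :
  subuniverse C -> jonsson_absorbing C l e ->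
  jonsson_absorbing C (k * l + k) chain_product.
Proof.
move=> hC eabs i _ c c' a Cc Cc'; rewrite tfun_chain_product.
apply: subuniverse_tfun => //; apply: eabs => //.
by rewrite -ltnS ltn_mod.
Qed.

End JonssonChainProduct.

Theorem lemma2p3 (S : signature) (A : algebra S) (B C : A -> Prop)
  (hB : subuniverse B) (hC : subuniverse C)
  (k l : nat) (d e : nat -> tterm S)
  (hd : jonsson_chain B k d) (he : jonsson_chain C l e) :
  exists f : nat -> tterm S,
    (forall a b, a <= k -> b <= l ->
       f (a * l.+1 + b) = compose3 (d a) (vx S) (e b) (vz S)) /\
    jonsson_chain B (k * l + k) f /\ jonsson_chain C (k * l + k) f.
Proof.
case/jonsson_chainP: hd => dabs did; case/jonsson_chainP: he => eabs eid.
have fid := chain_product_identities did eid.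
exists (chain_product l d e); split.
  by move=> a b _; apply: chain_product_block.
split; apply/jonsson_chainP; split=> //.
- exact: chain_product_absorbing_left.
- exact: chain_product_absorbing_right.
Qed.
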